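(* Let $T_1^f$ and $T_2^g$ be merge trees with node sets $V(T_1)$ and $V(T_2)$. Let $\Lambda_1 = \{|f(u)-g(w)| : u\in V(T_1), w \in V(T_2)\}$, $\Lambda_2 = \{|f(u)-f(u')|/2 : u,u' \in V(T_1)\}$, $\Lambda_3 = \{|g(w)-g(w')|/2 : w,w'\in V(T_2)\}$ and $\Lambda = \Lambda_1\cup\Lambda_2\cup\Lambda_3$. Then $d_I(T_1^f, T_2^g) \in \Lambda$.
   Context: A merge tree $T^h$ is a finite rooted tree $T$ with a continuous function $h: |T| \to \mathbb{R}$ on its underlying space (interior points of edges included) that is decreasing along every root-to-leaf path, modified by attaching to the root a ray upward along which $h$ increases to $+\infty$; $V(T)$ denotes the set of tree nodes (vertices of $T$). $u^{\varepsilon}$ is the unique ancestor of $u$ with $h(u^\varepsilon) - h(u) = \varepsilon$. For merge trees $T_1^f$, $T_2^g$, a pair of continuous maps $\alpha: |T_1| \to |T_2|$, $\beta: |T_2| \to |T_1|$ is $\varepsilon$-compatible if $g(\alpha(u)) = f(u)+\varepsilon$, $\beta(\alpha(u)) = u^{2\varepsilon}$ for all $u\in|T_1|$ and $f(\beta(w)) = g(w)+\varepsilon$, $\alpha(\beta(w)) = w^{2\varepsilon}$ for all $w \in |T_2|$; the interleaving distance $d_I(T_1^f,T_2^g)$ is the infimum of $\varepsilon$ for which such a pair exists. *)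

From Stdlib Require Import Reals Lra List.
Open Scope R_scope.

(* A finite rooted tree is given by a finite vertex type V, a root, and a parent
   map par (with par root = root) such that every vertex reaches the root.
   h gives the heights of the nodes; "h decreasing along every root-to-leaf path"
   is h v < h (par v) for every non-root v. *)
Record MergeTree := {
  V : Type;
  V_finite : exists l : list V, forall v : V, In v l;
  root : V;
  par : V -> V;
  par_root : par root = root;
  reach_root : forall v : V, exists n : nat, Nat.iter n par v = root;
  h : V -> R;
  h_par : forall v : V, v <> root -> h v < h (par v)
}.

Definition anc (T : MergeTree) (a v : V T) : Prop :=
  exists n : nat, Nat.iter n (par T) v = a.

(* Points of |T| (with the ray above the root attached): a point is (v, s)
   where v is the lower endpoint of the edge (v, par v) containing it (or v = root
   for points on the ray), and s its height: h v <= s < h (par v), resp. s >= h root.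
   Every edge is parametrised by height (h is strictly monotone on edges). *)
Record pt (T : MergeTree) := mkpt {
  pv : V T;
  ph : R;
  pvalid : h T pv <= ph /\ (pv = root T \/ ph < h T (par T pv))
}.
Arguments pv {T}.
Arguments ph {T}.


Definition ancp {T : MergeTree} (x y : pt T) : Prop :=
  anc T (pv y) (pv x) /\ ph x <= ph y.

Definition is_shift {T : MergeTree} (x : pt T) (eps : R) (y : pt T) : Prop :=
  ancp x y /\ ph y = ph x + eps.

(* Path-metric ball in the metric tree |T| (edge lengths = height differences):
   d(x,y) = ph x + ph y - 2 ph(lca x y) < r iff some common ancestor z has
   (ph z - ph x) + (ph z - ph y) < r. *)
Definition close {T : MergeTree} (x y : pt T) (r : R) : Prop :=
  exists z : pt T, ancp x z /\ ancp y z /\ (ph z - ph x) + (ph z - ph y) < r.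

Definition continuous_pt {T1 T2 : MergeTree} (a : pt T1 -> pt T2) : Prop :=
  forall (x : pt T1) (e : R), 0 < e ->
    exists d : R, 0 < d /\ forall y : pt T1, close x y d -> close (a x) (a y) e.

Definition compatible (T1 T2 : MergeTree) (eps : R)
  (a : pt T1 -> pt T2) (b : pt T2 -> pt T1) : Prop :=
  continuous_pt a /\ continuous_pt b /\
  (forall u : pt T1, ph (a u) = ph u + eps /\ is_shift u (2 * eps) (b (a u))) /\
  (forall w : pt T2, ph (b w) = ph w + eps /\ is_shift w (2 * eps) (a (b w))).

Definition interleaving_set (T1 T2 : MergeTree) (eps : R) : Prop :=
  0 <= eps /\ exists a b, compatible T1 T2 eps a b.

Definition is_glb (S : R -> Prop) (m : R) : Prop :=
  (forall x, S x -> m <= x) /\ (forall m', (forall x, S x -> m' <= x) -> m' <= m).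

Definition is_interleaving_distance (T1 T2 : MergeTree) (d : R) : Prop :=
  is_glb (interleaving_set T1 T2) d.

Definition Lambda (T1 T2 : MergeTree) (lam : R) : Prop :=
  (exists (u : V T1) (w : V T2), lam = Rabs (h T1 u - h T2 w)) \/
  (exists u u' : V T1, lam = Rabs (h T1 u - h T1 u') / 2) \/
  (exists w w' : V T2, lam = Rabs (h T2 w - h T2 w') / 2).

From Stdlib Require Import Reals Lra List Lia Classical ClassicalEpsilon ProofIrrelevance.
Open Scope R_scope.

(* Suppose (a, b) is an eps-compatible pair and no value of Lambda lies in (eps', eps].
   Then a can be shrunk to an eps'-shift: a node v goes to the point at height
   h v + eps' on the edge containing a(v) (no node of T2 lies in between, by Lambda_1),
   and an arbitrary point goes to the corresponding ancestor.  Composing the two shrunk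
   maps still lands on an ancestor, because a node m of T1 with
   h v < h m <= h v + 2 eps even satisfies h m <= h v + 2 eps' (by Lambda_2).  Since
   Lambda is finite and contains 0, an infimum d outside Lambda would be isolated from
   Lambda, and shrinking an interleaving slightly above d to one slightly below d is
   absurd.  Throughout, compatible maps are handled as height shifts preserving the
   ancestor order; continuity is equivalent to this by a real induction along the path
   to the root, using that nearby points of a finite tree are comparable. *)

Lemma finite_separation (l : list R) (d : R) :
  exists r, 0 < r /\ forall x, In x l -> x <> d -> r <= Rabs (x - d).
Proof.
  induction l as [|x0 l [r [Hr H]]].
  - exists 1. split; [lra | intros x []].
  - destruct (Req_dec x0 d) as [E|E].
    + exists r. split; [exact Hr|]. intros x [<-|I] N; [contradiction | auto].
    + exists (Rmin r (Rabs (x0 - d))). split.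
      * apply Rmin_pos; [exact Hr | apply Rabs_pos_lt; lra].
      * intros x [<-|I] N; [apply Rmin_r|].
        eapply Rle_trans; [apply Rmin_l | auto].
Qed.

Lemma glb_exists (S : R -> Prop) (m : R) :
  (exists x, S x) -> (forall x, S x -> m <= x) -> exists d, is_glb S d.
Proof.
  intros [x0 Sx0] Hm.
  destruct (completeness (fun x => S (- x))) as [M [Hub Hlub]].
  - exists (- m). intros x Sx. specialize (Hm _ Sx). lra.
  - exists (- x0). rewrite Ropp_involutive. exact Sx0.
  - exists (- M). split.
    + intros x Sx. enough (- x <= M) by lra.
      apply Hub. cbv beta. rewrite Ropp_involutive. exact Sx.
    + intros m' Hm'. enough (M <= - m') by lra.
      apply Hlub. intros x Sx. specialize (Hm' _ Sx). lra.
Qed.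

Lemma glb_approx (S : R -> Prop) (d r : R) :
  is_glb S d -> 0 < r -> exists e, S e /\ e < d + r.
Proof.
  intros [_ Hgreatest] Hr. apply NNPP. intros N.
  enough (d + r <= d) by lra.
  apply Hgreatest. intros x Sx. apply Rnot_lt_le. intros L. apply N. exists x. auto.
Qed.

Lemma exists_glb_in_finite (S P : R -> Prop) (l : list R) :
  (exists x, S x) -> (forall x, S x -> 0 <= x) ->
  P 0 -> (forall x, P x -> In x l) ->
  (forall e e', 0 <= e' <= e -> S e -> (forall x, P x -> ~ (e' < x <= e)) -> S e') ->
  exists d, is_glb S d /\ P d.
Proof.
  intros Hne Hpos P0 Hl Hshrink.
  destruct (glb_exists S 0 Hne Hpos) as [d Hd].
  exists d. split; [exact Hd|]. apply NNPP. intros Pd.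
  destruct (finite_separation l d) as [r [Hr Hsep]].
  assert (Hd0 : 0 <= d) by (apply (proj2 Hd); exact Hpos).
  (* 0 is in P, so the separation radius is at most d and d - r/2 is admissible *)
  assert (Hrd : r <= d).
  { assert (Hne0 : 0 <> d) by (intros <-; contradiction).
    specialize (Hsep 0 (Hl 0 P0) Hne0).
    rewrite Rminus_0_l, Rabs_Ropp, Rabs_right in Hsep; lra. }
  destruct (glb_approx S d r Hd Hr) as [e [Se Le]].
  assert (Hde : d <= e) by (apply (proj1 Hd); exact Se).
  assert (Se' : S (d - r / 2)).
  { apply (Hshrink e); [lra | exact Se |].
    intros x Px [L1 L2].
    assert (Hx : x <> d) by (intros ->; contradiction).
    specialize (Hsep x (Hl x Px) Hx).
    assert (Rabs (x - d) < r) by (apply Rabs_def1; lra). lra. }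
  pose proof (proj1 Hd _ Se'). lra.
Qed.

Lemma real_induction (lo hi : R) (P : R -> Prop) :
  lo <= hi -> P lo ->
  (forall t, lo <= t <= hi -> exists d, 0 < d /\
     forall s, lo <= s <= t -> t - d < s -> P s -> forall s', t <= s' < t + d -> P s') ->
  P hi.
Proof.
  intros Hlh Plo Step.
  set (E := fun t => lo <= t <= hi /\ forall s, lo <= s <= t -> P s).
  assert (Elo : E lo).
  { split; [lra|]. intros s Hs. replace s with lo by lra. exact Plo. }
  destruct (completeness E) as [s0 [Hub Hlub]].
  { exists hi. intros t [Ht _]. lra. }
  { exists lo. exact Elo. }
  assert (Hs0 : lo <= s0 <= hi).
  { split; [apply Hub, Elo | apply Hlub; intros t [Ht _]; lra]. }
  assert (Below : forall s, lo <= s < s0 -> P s).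
  { intros s Hs. apply NNPP. intros Ns.
    enough (s0 <= s) by lra. apply Hlub. intros t [Ht Pt].
    apply Rnot_lt_le. intros L. apply Ns, Pt. lra. }
  destruct (Step s0 Hs0) as [d [Hd Hstep]].
  assert (Above : forall s', s0 <= s' < s0 + d -> P s').
  { assert (Hs : exists s, lo <= s <= s0 /\ s0 - d < s /\ P s).
    { destruct (Rle_lt_dec s0 lo) as [L|L].
      - exists lo. refine (conj _ (conj _ Plo)); lra.
      - pose proof (Rmax_l lo (s0 - d / 2)). pose proof (Rmax_r lo (s0 - d / 2)).
        assert (Hs : Rmax lo (s0 - d / 2) < s0) by (apply Rmax_lub_lt; lra).
        set (s := Rmax lo (s0 - d / 2)) in *.
        exists s. refine (conj _ (conj _ _)); [lra | lra | apply Below; lra]. }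
    destruct Hs as [s [Hs1 [Hs2 Ps]]]. exact (Hstep s Hs1 Hs2 Ps). }
  assert (Hhi : hi <= s0).
  { apply Rnot_lt_le. intros L.
    pose proof (Rmin_l (s0 + d / 2) hi). pose proof (Rmin_r (s0 + d / 2) hi).
    assert (Ht2 : s0 < Rmin (s0 + d / 2) hi) by (apply Rmin_glb_lt; lra).
    set (t2 := Rmin (s0 + d / 2) hi) in *.
    assert (Et2 : E t2).
    { split; [lra|]. intros s Hs.
      destruct (Rlt_le_dec s s0); [apply Below | apply Above]; lra. }
    pose proof (Hub t2 Et2). lra. }
  apply Above. lra.
Qed.

Section Tree.
Context {T : MergeTree}.

Lemma anc_refl v : anc T v v.
Proof. exists 0%nat. reflexivity. Qed.

Lemma anc_trans a b c : anc T a b -> anc T b c -> anc T a c.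
Proof.
  intros [n Hn] [m Hm]. exists (n + m)%nat. rewrite Nat.iter_add, Hm. exact Hn.
Qed.

Lemma anc_par v : anc T (par T v) v.
Proof. exists 1%nat. reflexivity. Qed.

Lemma iter_par_root n : Nat.iter n (par T) (root T) = root T.
Proof. induction n as [|n IH]; simpl; [reflexivity | rewrite IH; apply par_root]. Qed.

Lemma anc_root v : anc T (root T) v.
Proof. exact (reach_root T v). Qed.

Lemma h_le_par v : h T v <= h T (par T v).
Proof.
  destruct (classic (v = root T)) as [->|E].
  - rewrite par_root. lra.
  - left. apply h_par. exact E.
Qed.

Lemma h_le_anc a v : anc T a v -> h T v <= h T a.
Proof.
  intros [n <-]. induction n as [|n IH]; simpl; [lra|].
  eapply Rle_trans; [exact IH | apply h_le_par].
Qed.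

Lemma h_par_le_anc a v : anc T a v -> a <> v -> v <> root T /\ h T (par T v) <= h T a.
Proof.
  intros [[|n] Hn] Hne; [exfalso; exact (Hne (eq_sym Hn))|].
  split.
  - intros ->. rewrite iter_par_root in Hn. congruence.
  - apply h_le_anc. exists n. rewrite <- Nat.iter_succ_r. exact Hn.
Qed.

Lemma anc_total a b v : anc T a v -> anc T b v -> anc T a b \/ anc T b a.
Proof.
  intros [i <-] [j <-].
  destruct (Compare_dec.le_lt_dec i j) as [L|L].
  - right. exists (j - i)%nat. rewrite <- Nat.iter_add. f_equal. lia.
  - left. exists (i - j)%nat. rewrite <- Nat.iter_add. f_equal. lia.
Qed.

Lemma first_anc_step v w n : anc T (Nat.iter n (par T) v) w -> ~ anc T v w ->
  exists k, (k < n)%nat /\ ~ anc T (Nat.iter k (par T) v) w /\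
            anc T (Nat.iter (S k) (par T) v) w.
Proof.
  induction n as [|n IH]; intros H1 H2; [exfalso; exact (H2 H1)|].
  destruct (classic (anc T (Nat.iter n (par T) v) w)) as [A|A].
  - destruct (IH A H2) as [k [Lk Hk]]. exists k. split; [lia | exact Hk].
  - exists n. split; [lia | split; assumption].
Qed.

Lemma pt_eq (x y : pt T) : pv x = pv y -> ph x = ph y -> x = y.
Proof.
  destruct x as [vx hx px], y as [vy hy py]; simpl. intros -> ->.
  f_equal. apply proof_irrelevance.
Qed.

Lemma ph_ge_h (x : pt T) : h T (pv x) <= ph x.
Proof. apply (pvalid T x). Qed.

Lemma ph_lt_h_par (x : pt T) : pv x <> root T -> ph x < h T (par T (pv x)).
Proof. intros N. destruct (pvalid T x) as [_ [E|E]]; [contradiction | exact E]. Qed.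

Lemma ph_lt_of_anc (x y : pt T) : anc T (pv y) (pv x) -> pv x <> pv y -> ph x < ph y.
Proof.
  intros A N. destruct (h_par_le_anc _ _ A (not_eq_sym N)) as [Nr L].
  pose proof (ph_lt_h_par x Nr). pose proof (ph_ge_h y). lra.
Qed.

Lemma ancp_refl (x : pt T) : ancp x x.
Proof. split; [apply anc_refl | lra]. Qed.

Lemma ancp_trans (x y z : pt T) : ancp x y -> ancp y z -> ancp x z.
Proof. intros [A1 L1] [A2 L2]. split; [eapply anc_trans; eauto | lra]. Qed.

Lemma ancp_antisym (x y : pt T) : ancp x y -> ph y <= ph x -> x = y.
Proof.
  intros [A L] L'. apply pt_eq; [|lra].
  apply NNPP. intros E. pose proof (ph_lt_of_anc x y A E). lra.
Qed.

Lemma ancp_of_ancestors (x y1 y2 : pt T) :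
  ancp x y1 -> ancp x y2 -> ph y1 <= ph y2 -> ancp y1 y2.
Proof.
  intros [A1 _] [A2 _] L.
  destruct (anc_total _ _ _ A1 A2) as [C|C]; [|split; assumption].
  destruct (classic (pv y2 = pv y1)) as [E|E].
  - split; [rewrite E; apply anc_refl | exact L].
  - pose proof (ph_lt_of_anc y2 y1 C E). lra.
Qed.

Definition comparable (x y : pt T) : Prop := ancp x y \/ ancp y x.

Lemma comparable_sym (x y : pt T) : comparable x y -> comparable y x.
Proof. intros [C|C]; [right | left]; exact C. Qed.

Lemma comparable_ancestors (x y1 y2 : pt T) : ancp x y1 -> ancp x y2 -> comparable y1 y2.
Proof.
  intros A1 A2. destruct (Rle_dec (ph y1) (ph y2)).
  - left. apply (ancp_of_ancestors x); auto.
  - right. apply (ancp_of_ancestors x); auto; lra.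
Qed.

Lemma ancp_of_comparable (x y : pt T) : comparable x y -> ph x <= ph y -> ancp x y.
Proof.
  intros [C|C] L; [exact C|].
  rewrite (ancp_antisym y x C L). apply ancp_refl.
Qed.

Lemma comparable_of_anc (x y : pt T) : anc T (pv x) (pv y) -> comparable x y.
Proof.
  intros A. destruct (Rle_dec (ph y) (ph x)) as [L|L].
  - right. split; assumption.
  - left. split; [|lra].
    destruct (classic (pv y = pv x)) as [E|E]; [rewrite E; apply anc_refl|].
    pose proof (ph_lt_of_anc y x A E). lra.
Qed.

Definition vpt (v : V T) : pt T.
Proof.
  refine (mkpt T v (h T v) _).
  split; [lra|].
  destruct (classic (v = root T)) as [E|E]; [left; exact E | right; apply h_par; exact E].
Defined.

Lemma ph_vpt v : ph (vpt v) = h T v.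
Proof. reflexivity. Qed.

Lemma ancp_vpt (x : pt T) : ancp (vpt (pv x)) x.
Proof. split; [apply anc_refl | apply ph_ge_h]. Qed.

Lemma ancp_above_root (x y : pt T) : ancp (vpt (root T)) y -> ph x <= ph y -> ancp x y.
Proof. intros [A _] L. split; [eapply anc_trans; [exact A | apply anc_root] | exact L]. Qed.

Lemma exists_anc_at_height n v : Nat.iter n (par T) v = root T ->
  forall t, h T v <= t -> exists y : pt T, anc T (pv y) v /\ ph y = t.
Proof.
  revert v. induction n as [|n IH]; intros v Hv t Ht.
  - simpl in Hv. subst v.
    exists (mkpt T (root T) t (conj Ht (or_introl eq_refl))).
    split; [apply anc_refl | reflexivity].
  - destruct (Rlt_dec t (h T (par T v))) as [L|L].
    + exists (mkpt T v t (conj Ht (or_intror L))). split; [apply anc_refl | reflexivity].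
    + rewrite Nat.iter_succ_r in Hv.
      destruct (IH (par T v) Hv t) as [y [A E]]; [lra|].
      exists y. split; [eapply anc_trans; [exact A | apply anc_par] | exact E].
Qed.

(* [raise x eps] is the paper's x^eps; it is a junk value when eps < 0. *)
Definition raise (x : pt T) (eps : R) : pt T := epsilon (inhabits x) (is_shift x eps).

Lemma raise_spec (x : pt T) eps : 0 <= eps -> is_shift x eps (raise x eps).
Proof.
  intros He. unfold raise. apply epsilon_spec.
  destruct (reach_root T (pv x)) as [n Hn].
  destruct (exists_anc_at_height n (pv x) Hn (ph x + eps)) as [y [A E]].
  { pose proof (ph_ge_h x). lra. }
  exists y. split; [split; [exact A | lra] | exact E].
Qed.

Definition ray_pt (t : R) : pt T := raise (vpt (root T)) (t - h T (root T)).

Lemma ray_pt_spec t : h T (root T) <= t -> ancp (vpt (root T)) (ray_pt t) /\ ph (ray_pt t) = t.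
Proof.
  intros Ht. destruct (raise_spec (vpt (root T)) (t - h T (root T))) as [A E]; [lra|].
  split; [exact A|]. unfold ray_pt. rewrite E, ph_vpt. lra.
Qed.

Definition lower (x : pt T) (t : R) : pt T :=
  epsilon (inhabits x) (fun y => pv y = pv x /\ ph y = t).

Lemma lower_spec (x : pt T) t : h T (pv x) <= t <= ph x ->
  ancp (lower x t) x /\ pv (lower x t) = pv x /\ ph (lower x t) = t.
Proof.
  intros Ht.
  assert (Hy : pv (lower x t) = pv x /\ ph (lower x t) = t).
  { unfold lower. apply epsilon_spec.
    assert (Hvalid : h T (pv x) <= t /\ (pv x = root T \/ t < h T (par T (pv x)))).
    { split; [lra|]. destruct (classic (pv x = root T)) as [E|E]; [left; exact E | right].
      pose proof (ph_lt_h_par x E). lra. }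
    exists (mkpt T (pv x) t Hvalid). split; reflexivity. }
  destruct Hy as [P E]. split; [|split; assumption].
  split; [rewrite P; apply anc_refl | lra].
Qed.

Lemma lca (p q z : pt T) : ancp p z -> ancp q z ->
  comparable p q \/
  exists m, ancp p (vpt m) /\ ancp q (vpt m) /\ ph p < h T m /\ h T m <= ph z.
Proof.
  intros [[n Hn] _] [Aq _].
  destruct (classic (anc T (pv p) (pv q))) as [C|C]; [left; apply comparable_of_anc, C|].
  destruct (classic (anc T (pv q) (pv p))) as [C'|C'].
  { left. apply comparable_sym, comparable_of_anc, C'. }
  right.
  assert (A1 : anc T (Nat.iter n (par T) (pv p)) (pv q)) by (rewrite Hn; exact Aq).
  destruct (first_anc_step (pv p) (pv q) n A1 C) as [k [Lk [_ Am]]].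
  set (m := Nat.iter (S k) (par T) (pv p)) in *.
  assert (Amp : anc T m (pv p)) by (exists (S k); reflexivity).
  assert (Hp : ph p < h T m).
  { apply (ph_lt_of_anc p (vpt m) Amp). intros E. apply C. rewrite E. exact Am. }
  assert (Hq : ph q < h T m).
  { apply (ph_lt_of_anc q (vpt m) Am). intros E. apply C'. rewrite E. exact Amp. }
  exists m. split; [split; [exact Amp | simpl; lra]|].
  split; [split; [exact Am | simpl; lra]|]. split; [exact Hp|].
  assert (Azm : anc T (pv z) m).
  { exists (n - S k)%nat. unfold m. rewrite <- Nat.iter_add.
    replace (n - S k + S k)%nat with n by lia. exact Hn. }
  pose proof (h_le_anc _ _ Azm). pose proof (ph_ge_h z). lra.
Qed.

Lemma close_comparable (p : pt T) : exists e, 0 < e /\ forall q, close p q e -> comparable p q.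
Proof.
  destruct (V_finite T) as [vs Hvs].
  destruct (finite_separation (map (h T) vs) (ph p)) as [e [He Hsep]].
  exists e. split; [exact He|]. intros q [z [Az [Bz Lz]]].
  destruct (lca p q z Az Bz) as [C | [m [_ [_ [Lm Lmz]]]]]; [exact C|].
  assert (Hm : e <= Rabs (h T m - ph p)) by (apply Hsep; [apply in_map, Hvs | lra]).
  rewrite Rabs_right in Hm by lra. destruct Bz. lra.
Qed.

Lemma close_of_comparable (x y : pt T) d :
  comparable x y -> Rabs (ph y - ph x) < d -> close x y d.
Proof.
  intros C L. apply Rabs_def2 in L. destruct C as [C|C].
  - exists y. split; [exact C | split; [apply ancp_refl | lra]].
  - exists x. split; [apply ancp_refl | split; [exact C | lra]].
Qed.

End Tree.

Definition monotone {A B : MergeTree} (a : pt A -> pt B) : Prop :=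
  forall x y, ancp x y -> ancp (a x) (a y).

Definition shifts_height {A B : MergeTree} (a : pt A -> pt B) (e : R) : Prop :=
  forall x, ph (a x) = ph x + e.

Lemma continuous_of_monotone {A B : MergeTree} (a : pt A -> pt B) e :
  monotone a -> shifts_height a e -> continuous_pt a.
Proof.
  intros Ma Sa x r Hr. exists r. split; [exact Hr|].
  intros y [z [Az [Bz L]]]. exists (a z).
  split; [apply Ma, Az|]. split; [apply Ma, Bz|]. rewrite !Sa. lra.
Qed.

Lemma continuous_locally_comparable {A B : MergeTree} (a : pt A -> pt B) :
  continuous_pt a -> forall y, exists d, 0 < d /\
    forall y', comparable y y' -> Rabs (ph y' - ph y) < d -> comparable (a y) (a y').
Proof.
  intros Ca y. destruct (close_comparable (a y)) as [g [Hg G]].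
  destruct (Ca y g Hg) as [d [Hd D]].
  exists d. split; [exact Hd|]. intros y' C L. apply G, D, close_of_comparable; assumption.
Qed.

Lemma monotone_of_continuous {A B : MergeTree} (a : pt A -> pt B) e :
  continuous_pt a -> shifts_height a e -> monotone a.
Proof.
  intros Ca Sa x y Axy.
  set (P := fun t => forall z, ancp x z -> ph z = t -> ancp (a x) (a z)).
  enough (HP : P (ph y)) by (apply HP; [exact Axy | reflexivity]).
  apply (real_induction (ph x) (ph y) P); [destruct Axy; lra | |].
  - intros z Az Ez. rewrite <- (ancp_antisym x z Az); [apply ancp_refl | lra].
  - intros t Ht.
    destruct (raise_spec x (t - ph x)) as [Axt Eyt]; [lra|].
    set (yt := raise x (t - ph x)) in *.
    destruct (continuous_locally_comparable a Ca yt) as [d [Hd Loc]].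
    exists d. split; [exact Hd|]. intros s Hs Ls Ps s' Hs' z Az Ez.
    destruct (raise_spec x (s - ph x)) as [Axs Eys]; [lra|].
    set (ys := raise x (s - ph x)) in *.
    apply ancp_trans with (a yt).
    + apply ancp_trans with (a ys); [apply Ps; [exact Axs | lra]|].
      apply ancp_of_comparable; [|rewrite !Sa; lra].
      apply comparable_sym, Loc; [apply (comparable_ancestors x); assumption|].
      apply Rabs_def1; lra.
    + apply ancp_of_comparable; [|rewrite !Sa; lra].
      apply Loc; [apply (comparable_ancestors x); assumption|].
      apply Rabs_def1; lra.
Qed.

Lemma compatible_iff (T1 T2 : MergeTree) e (a : pt T1 -> pt T2) (b : pt T2 -> pt T1) :
  compatible T1 T2 e a b <->
  shifts_height a e /\ shifts_height b e /\ monotone a /\ monotone b /\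
  (forall u, ancp u (b (a u))) /\ (forall w, ancp w (a (b w))).
Proof.
  split.
  - intros (Ca & Cb & Hab & Hba).
    assert (Sa : shifts_height a e) by (intro u; apply (Hab u)).
    assert (Sb : shifts_height b e) by (intro w; apply (Hba w)).
    split; [exact Sa|]. split; [exact Sb|].
    split; [apply (monotone_of_continuous a e); assumption|].
    split; [apply (monotone_of_continuous b e); assumption|].
    split; [intro u; apply (Hab u) | intro w; apply (Hba w)].
  - intros (Sa & Sb & Ma & Mb & BA & AB).
    split; [apply (continuous_of_monotone a e); assumption|].
    split; [apply (continuous_of_monotone b e); assumption|].
    split.
    + intro u. split; [apply Sa | split; [apply BA | rewrite Sb, Sa; lra]].
    + intro w. split; [apply Sb | split; [apply AB | rewrite Sa, Sb; lra]].
Qed.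

Definition shrink_vertex {A B : MergeTree} (a : pt A -> pt B) (e' : R) (v : V A) : pt B :=
  lower (a (vpt v)) (h A v + e').

Definition shrink {A B : MergeTree} (a : pt A -> pt B) (e' : R) (u : pt A) : pt B :=
  raise (shrink_vertex a e' (pv u)) (ph u - h A (pv u)).

Section Shrink.
Variables (A B : MergeTree) (a : pt A -> pt B) (e e' : R).
Hypothesis He : e' <= e.
Hypothesis Sa : shifts_height a e.
Hypothesis Hnode : forall v, h B (pv (a (vpt v))) <= h A v + e'.

Lemma shrink_vertex_spec v :
  ancp (shrink_vertex a e' v) (a (vpt v)) /\
  pv (shrink_vertex a e' v) = pv (a (vpt v)) /\ ph (shrink_vertex a e' v) = h A v + e'.
Proof. apply lower_spec. rewrite Sa, ph_vpt. split; [apply Hnode | lra]. Qed.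

Lemma shrink_spec u :
  ancp (shrink_vertex a e' (pv u)) (shrink a e' u) /\ ph (shrink a e' u) = ph u + e'.
Proof.
  destruct (raise_spec (shrink_vertex a e' (pv u)) (ph u - h A (pv u))) as [Au Hu].
  { pose proof (ph_ge_h u). lra. }
  split; [exact Au|]. unfold shrink.
  rewrite Hu, (proj2 (proj2 (shrink_vertex_spec (pv u)))). lra.
Qed.

Lemma shifts_height_shrink : shifts_height (shrink a e') e'.
Proof. intro u. apply shrink_spec. Qed.

Hypothesis Ma : monotone a.

Lemma shrink_vertex_par v : ancp (shrink_vertex a e' v) (shrink_vertex a e' (par A v)).
Proof.
  destruct (shrink_vertex_spec v) as [_ [Pv Hv]].
  destruct (shrink_vertex_spec (par A v)) as [_ [Pp Hp]].
  assert (Avp : ancp (vpt v) (vpt (par A v))) by (split; [apply anc_par | apply h_le_par]).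
  destruct (Ma _ _ Avp) as [Aa _].
  split; [rewrite Pv, Pp; exact Aa | rewrite Hv, Hp; pose proof (h_le_par v); lra].
Qed.

Lemma shrink_vertex_anc p c : anc A p c -> ancp (shrink_vertex a e' c) (shrink_vertex a e' p).
Proof.
  intros [n <-]. induction n as [|n IH]; [apply ancp_refl|].
  eapply ancp_trans; [exact IH | apply shrink_vertex_par].
Qed.

Lemma monotone_shrink : monotone (shrink a e').
Proof.
  intros x y Axy.
  destruct (shrink_spec x) as [Ax Hx]. destruct (shrink_spec y) as [Ay Hy].
  apply (ancp_of_ancestors (shrink_vertex a e' (pv x))); [exact Ax | |].
  - eapply ancp_trans; [apply shrink_vertex_anc, (proj1 Axy) | exact Ay].
  - rewrite Hx, Hy. destruct Axy; lra.
Qed.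

End Shrink.

Definition Lambda_free (T1 T2 : MergeTree) (e' e : R) : Prop :=
  forall l, Lambda T1 T2 l -> ~ (e' < l <= e).

Lemma Lambda_sym (T1 T2 : MergeTree) l : Lambda T1 T2 l -> Lambda T2 T1 l.
Proof.
  intros [[u [w ->]] | [[u [u' ->]] | [w [w' ->]]]].
  - left. exists w, u. apply Rabs_minus_sym.
  - right; right. eauto.
  - right; left. eauto.
Qed.

Lemma Lambda_free_sym (T1 T2 : MergeTree) e' e :
  Lambda_free T1 T2 e' e -> Lambda_free T2 T1 e' e.
Proof. intros HF l Hl. apply HF, Lambda_sym, Hl. Qed.

Lemma Lambda_0 (T1 T2 : MergeTree) : Lambda T1 T2 0.
Proof. right; left. exists (root T1), (root T1). rewrite Rminus_diag, Rabs_R0. lra. Qed.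

Lemma Lambda_finite (T1 T2 : MergeTree) : exists l, forall x, Lambda T1 T2 x -> In x l.
Proof.
  destruct (V_finite T1) as [l1 H1]. destruct (V_finite T2) as [l2 H2].
  exists (map (fun p => Rabs (h T1 (fst p) - h T2 (snd p))) (list_prod l1 l2) ++
          map (fun p => Rabs (h T1 (fst p) - h T1 (snd p)) / 2) (list_prod l1 l1) ++
          map (fun p => Rabs (h T2 (fst p) - h T2 (snd p)) / 2) (list_prod l2 l2)).
  intros x [[u [w ->]] | [[u [u' ->]] | [w [w' ->]]]]; rewrite !in_app_iff.
  - left. apply in_map_iff. exists (u, w). split; [reflexivity | apply in_prod; auto].
  - right; left. apply in_map_iff. exists (u, u'). split; [reflexivity | apply in_prod; auto].
  - right; right. apply in_map_iff. exists (w, w'). split; [reflexivity | apply in_prod; auto].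
Qed.

Lemma Lambda_free_node_image {A B : MergeTree} (a : pt A -> pt B) e e' :
  0 <= e' -> Lambda_free A B e' e -> shifts_height a e ->
  forall v, h B (pv (a (vpt v))) <= h A v + e'.
Proof.
  intros He HF Sa v. pose proof (ph_ge_h (a (vpt v))) as Hw. rewrite Sa, ph_vpt in Hw.
  apply Rnot_lt_le. intros L. apply (HF (Rabs (h A v - h B (pv (a (vpt v)))))).
  - left. eauto.
  - rewrite Rabs_minus_sym, Rabs_right; [split |]; lra.
Qed.

Lemma Lambda_free_node_gap (A B : MergeTree) e e' :
  Lambda_free A B e' e -> forall v m : V A,
  h A v < h A m -> h A m <= h A v + 2 * e -> h A m <= h A v + 2 * e'.
Proof.
  intros HF v m L1 L2. apply Rnot_lt_le. intros L.
  apply (HF (Rabs (h A m - h A v) / 2)); [right; left; eauto | rewrite Rabs_right; [split |]; lra].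
Qed.

Section ShrinkBack.
Variables (A B : MergeTree) (a : pt A -> pt B) (b : pt B -> pt A) (e e' : R).
Hypothesis He : 0 <= e' <= e.
Hypothesis HF : Lambda_free A B e' e.
Hypothesis Sa : shifts_height a e.
Hypothesis Sb : shifts_height b e.
Hypothesis Mb : monotone b.
Hypothesis BA : forall u, ancp u (b (a u)).

Let Ha := Lambda_free_node_image a e e' (proj1 He) HF Sa.
Let Hb := Lambda_free_node_image b e e' (proj1 He) (Lambda_free_sym A B e' e HF) Sb.

Lemma shrink_vertex_back v : ancp (vpt v) (shrink b e' (shrink_vertex a e' v)).
Proof.
  destruct (shrink_vertex_spec A B a e e' (proj2 He) Sa Ha v) as [_ [Pw Hy]].
  set (y := shrink_vertex a e' v) in *.
  destruct (shrink_spec B A b e e' (proj2 He) Sb Hb y) as [QY HY].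
  destruct (shrink_vertex_spec B A b e e' (proj2 He) Sb Hb (pv y)) as [Qb _].
  set (Q := shrink_vertex b e' (pv y)) in *.
  set (Y := shrink b e' y) in *.
  assert (HQP : ancp Q (b (a (vpt v)))).
  { eapply ancp_trans; [exact Qb | apply Mb]. rewrite Pw. apply ancp_vpt. }
  destruct (lca (vpt v) Q (b (a (vpt v))) (BA (vpt v)) HQP)
    as [[C | C] | [m [Am [Qm [Lm Lmz]]]]].
  - eapply ancp_trans; [exact C | exact QY].
  - apply (ancp_of_ancestors Q); [exact C | exact QY | rewrite HY, Hy, ph_vpt; lra].
  - rewrite Sb, Sa, ph_vpt in Lmz. rewrite ph_vpt in Lm.
    assert (Hm : h A m <= h A v + 2 * e') by (apply (Lambda_free_node_gap A B e e' HF); lra).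
    eapply ancp_trans; [exact Am |].
    apply (ancp_of_ancestors Q); [exact Qm | exact QY | rewrite HY, Hy, ph_vpt; lra].
Qed.

Lemma shrink_shrink u : is_shift u (2 * e') (shrink b e' (shrink a e' u)).
Proof.
  destruct (shrink_spec A B a e e' (proj2 He) Sa Ha u) as [Au Hu].
  destruct (shrink_spec B A b e e' (proj2 He) Sb Hb (shrink a e' u)) as [_ Hba].
  assert (Hv : ancp (vpt (pv u)) (shrink b e' (shrink a e' u))).
  { eapply ancp_trans; [apply shrink_vertex_back |].
    apply (monotone_shrink B A b e e' (proj2 He) Sb Hb Mb), Au. }
  split; [|lra].
  apply (ancp_of_ancestors (vpt (pv u))); [apply ancp_vpt | exact Hv | lra].
Qed.

End ShrinkBack.

Lemma interleaving_set_shrink (T1 T2 : MergeTree) e e' :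
  0 <= e' <= e -> Lambda_free T1 T2 e' e ->
  interleaving_set T1 T2 e -> interleaving_set T1 T2 e'.
Proof.
  intros He HF [_ [a [b Hab]]].
  apply compatible_iff in Hab as (Sa & Sb & Ma & Mb & BA & AB).
  pose proof (Lambda_free_sym T1 T2 e' e HF) as HF'.
  pose proof (Lambda_free_node_image a e e' (proj1 He) HF Sa) as Ha.
  pose proof (Lambda_free_node_image b e e' (proj1 He) HF' Sb) as Hb.
  split; [apply He|]. exists (shrink a e'), (shrink b e'). apply compatible_iff.
  split; [apply (shifts_height_shrink T1 T2 a e); [apply He | exact Sa | exact Ha]|].
  split; [apply (shifts_height_shrink T2 T1 b e); [apply He | exact Sb | exact Hb]|].
  split; [apply (monotone_shrink T1 T2 a e); [apply He | exact Sa | exact Ha | exact Ma]|].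
  split; [apply (monotone_shrink T2 T1 b e); [apply He | exact Sb | exact Hb | exact Mb]|].
  split.
  - intro u. exact (proj1 (shrink_shrink T1 T2 a b e e' He HF Sa Sb Mb BA u)).
  - intro w. exact (proj1 (shrink_shrink T2 T1 b a e e' He HF' Sb Sa Ma AB w)).
Qed.

Lemma h_lower_bound (T : MergeTree) : exists m, forall v, m <= h T v.
Proof.
  destruct (V_finite T) as [vs Hvs].
  assert (Hl : forall l : list (V T), exists m, forall v, In v l -> m <= h T v).
  { induction l as [|x l [m Hm]]; [exists 0; intros v []|].
    exists (Rmin m (h T x)). intros v [<-|I]; [apply Rmin_r|].
    eapply Rle_trans; [apply Rmin_l | auto]. }
  destruct (Hl vs) as [m Hm]. exists m. intro v. apply Hm, Hvs.
Qed.

(* Sending everything to the root rays of the other tree interleaves for large eps. *)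
Lemma interleaving_set_nonempty (T1 T2 : MergeTree) : exists e, interleaving_set T1 T2 e.
Proof.
  destruct (h_lower_bound T1) as [m1 H1]. destruct (h_lower_bound T2) as [m2 H2].
  set (e := Rabs (h T2 (root T2) - m1) + Rabs (h T1 (root T1) - m2)).
  pose proof (Rle_abs (h T2 (root T2) - m1)). pose proof (Rabs_pos (h T2 (root T2) - m1)).
  pose proof (Rle_abs (h T1 (root T1) - m2)). pose proof (Rabs_pos (h T1 (root T1) - m2)).
  assert (Ha : forall u : pt T1, h T2 (root T2) <= ph u + e).
  { intro u. pose proof (H1 (pv u)). pose proof (ph_ge_h u). unfold e. lra. }
  assert (Hb : forall w : pt T2, h T1 (root T1) <= ph w + e).
  { intro w. pose proof (H2 (pv w)). pose proof (ph_ge_h w). unfold e. lra. }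
  set (a := fun u : pt T1 => ray_pt (T := T2) (ph u + e)).
  set (b := fun w : pt T2 => ray_pt (T := T1) (ph w + e)).
  assert (Ra : forall u, ancp (vpt (root T2)) (a u) /\ ph (a u) = ph u + e)
    by (intro u; apply ray_pt_spec, Ha).
  assert (Rb : forall w, ancp (vpt (root T1)) (b w) /\ ph (b w) = ph w + e)
    by (intro w; apply ray_pt_spec, Hb).
  exists e. split; [unfold e; lra|]. exists a, b. apply compatible_iff.
  split; [intro u; apply Ra|]. split; [intro w; apply Rb|].
  split; [intros x y [_ L]; apply ancp_above_root;
          [apply Ra | rewrite (proj2 (Ra x)), (proj2 (Ra y)); lra]|].
  split; [intros x y [_ L]; apply ancp_above_root;
          [apply Rb | rewrite (proj2 (Rb x)), (proj2 (Rb y)); lra]|].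
  split; [intro u | intro w]; apply ancp_above_root.
  - apply Rb.
  - rewrite (proj2 (Rb (a u))), (proj2 (Ra u)). unfold e. lra.
  - apply Ra.
  - rewrite (proj2 (Ra (b w))), (proj2 (Rb w)). unfold e. lra.
Qed.

Theorem lemma4 (T1 T2 : MergeTree) :
  exists d : R, is_interleaving_distance T1 T2 d /\ Lambda T1 T2 d.
Proof.
  destruct (Lambda_finite T1 T2) as [l Hl].
  apply (exists_glb_in_finite (interleaving_set T1 T2) (Lambda T1 T2) l).
  - apply interleaving_set_nonempty.
  - intros e [He _]. exact He.
  - apply Lambda_0.
  - exact Hl.
  - intros e e' He Se HF. exact (interleaving_set_shrink T1 T2 e e' He HF Se).
Qed.
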